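(* Let $B>0$ and $0<C<\sqrt{2}\,B$. On $\ell^2(\mathbb{N}_0)$ with standard orthonormal basis $(e_k)_{k\ge 0}$, let $H$ be the bounded self-adjoint Jacobi operator with zero diagonal and off-diagonal entries $(C,B,B,\dots)$, i.e. $$H e_0=C e_1,\qquad H e_1=C e_0+B e_2,\qquad H e_k=B e_{k-1}+B e_{k+1}\ (k\ge 2).$$ Let $P=\sum_{k=0}^{\infty}\big(e_{2k}e_{2k}^\dagger-e_{2k+1}e_{2k+1}^\dagger\big)$, i.e. $Pe_k=(-1)^k e_k$. Fix a finite index $j\ge 0$ and let $\psi(t)=e^{-iHt}e_j$. Then $$\lim_{t\to+\infty}\langle P(t)\rangle=\lim_{t\to+\infty}\langle\psi(t),P\psi(t)\rangle=0 .$$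
   Context: Units with $\hbar=1$; $\langle P(t)\rangle$ is the expectation value of the parity-like operator $P$ (the ''even-odd difference'') in the time-evolved state $e^{-iHt}e_j$. *)

From Stdlib Require Import Reals Lra Lia Arith.
From Coquelicot Require Import Coquelicot.
Open Scope R_scope.

(* Off-diagonal entries of the Jacobi matrix: a_0 = C, a_k = B (k >= 1),
   with H_{k,k+1} = H_{k+1,k} = a_k and zero diagonal. *)
Definition offdiag (B C : R) (k : nat) : R :=
  match k with O => C | S _ => B end.

Definition applyH (B C : R) (v : nat -> R) (k : nat) : R :=
  match k with
  | O => offdiag B C 0 * v 1%nat
  | S k' => offdiag B C k' * v k' + offdiag B C k * v (S k)
  end.

Definition basis_vec (j : nat) (k : nat) : R := if Nat.eqb k j then 1 else 0.

Fixpoint Hpow_e (B C : R) (j : nat) (n : nat) : nat -> R :=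
  match n with
  | O => basis_vec j
  | S n' => applyH B C (Hpow_e B C j n')
  end.

(* psi(t) = e^{-iHt} e_j = sum_n (-i t)^n / n! H^n e_j  (H bounded, so the
   exponential series converges in norm, hence coordinatewise).
   Real part: cos(Ht) e_j; imaginary part: -sin(Ht) e_j. *)
Definition psi_re (B C : R) (j : nat) (t : R) (k : nat) : R :=
  Series (fun m => (-1) ^ m * t ^ (2 * m) / INR (fact (2 * m))
                   * Hpow_e B C j (2 * m) k).

Definition psi_im (B C : R) (j : nat) (t : R) (k : nat) : R :=
  - Series (fun m => (-1) ^ m * t ^ (2 * m + 1) / INR (fact (2 * m + 1))
                     * Hpow_e B C j (2 * m + 1) k).

Definition parity_expect (B C : R) (j : nat) (t : R) : R :=
  Series (fun k => (-1) ^ k *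
            (psi_re B C j t k ^ 2 + psi_im B C j t k ^ 2)).

(** Let [p_k] be the orthogonal polynomials of the Jacobi matrix [H] and
    [q_k x = sin x * p_k (2B cos x)] ([eigenfun]), so that [H q(x) = 2B cos x * q(x)] for
    [0 < x < PI].  When [0 < C < sqrt 2 * B], [H] has no eigenvalues and the [q_k] are
    orthonormal in [L^2((0, PI), w)] for [w x = 2c / (PI (1 - 2r cos 2x + r^2))], where
    [c = C^2 / B^2] and [r = c - 1] satisfies [|r| < 1].  Hence the coordinates of
    [cos(tH) e_j] and [sin(tH) e_j] are the coefficients of [cos(2Bt cos x) q_j] and
    [sin(2Bt cos x) q_j] in this system.  The first vector lives on the sites with the
    parity of [j] and the second on the others, so by Parseval
    [<P(t)> = (-1)^j * \int_0^PI cos(4Bt cos x) q_j(x)^2 w(x) dx].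
    This is proved for the Taylor truncations of [cos(tH)] and [sin(tH)], which are finite
    combinations of the [q_k] (so no completeness is needed), and then passed to the limit.
    Finally [q_j^2 w = sin x * psi x] with [psi] smooth, and one integration by parts
    against [d/dx sin(l cos x) = - l sin x cos(l cos x)] shows the integral is [O(1/t)]. *)

From Stdlib Require Import Reals Lra Lia Arith Factorial.
From Coquelicot Require Import Coquelicot.
Open Scope R_scope.

(** Coquelicot states these equalities in the carrier of an abstract module, where [ring]
    and [field] do not apply to the resulting goals; these versions are stated over [R]. *)
Lemma RInt_ext_R (f g : R -> R) a b :
  (forall x, Rmin a b < x < Rmax a b -> f x = g x) -> RInt f a b = RInt g a b.
Proof. exact (RInt_ext f g a b). Qed.

Lemma sum_n_ext_R (u v : nat -> R) n :
  (forall k, (k <= n)%nat -> u k = v k) -> sum_n u n = sum_n v n.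
Proof. exact (sum_n_ext_loc u v n). Qed.

Lemma sum_n_Rminus (u v : nat -> R) n :
  sum_n (fun k => u k - v k) n = sum_n u n - sum_n v n.
Proof.
  induction n as [|n IH]; [now rewrite !sum_O|].
  rewrite !sum_Sn, IH. unfold plus; simpl; ring.
Qed.

Lemma sum_n_Rmult_l (c : R) (u : nat -> R) n :
  sum_n (fun k => c * u k) n = c * sum_n u n.
Proof. exact (sum_n_mult_l c u n). Qed.

Lemma sum_n_Rmult_r (c : R) (u : nat -> R) n :
  sum_n (fun k => u k * c) n = sum_n u n * c.
Proof. exact (sum_n_mult_r c u n). Qed.

Lemma sum_n_eq_0 (u : nat -> R) n : (forall k, (k <= n)%nat -> u k = 0) -> sum_n u n = 0.
Proof.
  intros Hu. induction n as [|n IH]; [rewrite sum_O; auto|].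
  rewrite sum_Sn, IH, Hu by auto. unfold plus; simpl; ring.
Qed.

Lemma sum_n_kronecker (f : nat -> R) j n : (j <= n)%nat ->
  sum_n (fun k => if Nat.eqb k j then f k else 0) n = f j.
Proof.
  induction n as [|n IH]; intros Hj.
  - rewrite sum_O. replace j with 0%nat by lia. reflexivity.
  - rewrite sum_Sn. destruct (Nat.eq_dec j (S n)) as [->|Hne].
    + rewrite Nat.eqb_refl, sum_n_eq_0; [unfold plus; simpl; ring|].
      intros k Hk. destruct (Nat.eqb_spec k (S n)); [lia|auto].
    + rewrite IH by lia. destruct (Nat.eqb_spec (S n) j); [lia|unfold plus; simpl; ring].
Qed.

Lemma Series_minus_sum_n (a : nat -> R) N :
  ex_series a -> Series a - sum_n a N = Series (fun k => a (S N + k)%nat).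
Proof.
  intros Ha. rewrite (Series_incr_n a (S N)) by (auto; lia). simpl pred.
  rewrite sum_n_Reals. ring.
Qed.

Lemma Series_nonneg (a : nat -> R) : (forall n, 0 <= a n) -> ex_series a -> 0 <= Series a.
Proof.
  intros Ha Hex. replace 0 with (Series (fun n => 0 * a n))
    by (rewrite Series_scal_l; ring).
  apply Series_le; auto. intros n. specialize (Ha n). lra.
Qed.

Lemma sum_n_le_Series (a : nat -> R) N : (forall n, 0 <= a n) -> ex_series a ->
  sum_n a N <= Series a.
Proof.
  intros Ha Hex.
  enough (0 <= Series a - sum_n a N) by lra.
  rewrite Series_minus_sum_n by exact Hex.
  apply Series_nonneg; [auto | now apply ex_series_incr_n].
Qed.

Lemma sum_n_dominated (a E : nat -> R) c N :
  (forall n, Rabs (a n) <= c * E n) -> Rabs (sum_n a N) <= c * sum_n E N.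
Proof.
  intros H. induction N as [|N IH]; [rewrite !sum_O; auto|].
  rewrite !sum_Sn. unfold plus; simpl.
  eapply Rle_trans; [apply Rabs_triang|]. specialize (H (S N)). lra.
Qed.

Lemma Series_dominated (a E : nat -> R) c : 0 <= c ->
  (forall n, Rabs (a n) <= c * E n) -> ex_series E ->
  ex_series a /\ Rabs (Series a) <= c * Series E.
Proof.
  intros Hc H HE.
  assert (HcE : ex_series (fun n => c * E n)) by exact (ex_series_scal_l c E HE).
  assert (Ha : ex_series (fun n => Rabs (a n))).
  { apply (ex_series_le (K := R_AbsRing) (V := R_CompleteNormedModule) _ (fun n => c * E n)); [|exact HcE].
    intros n. unfold norm; simpl. rewrite Rabs_Rabsolu. auto. }
  split; [now apply ex_series_Rabs|].
  eapply Rle_trans; [now apply Series_Rabs|]. rewrite <- Series_scal_l.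
  apply Series_le; auto. intros n; split; [apply Rabs_pos | auto].
Qed.

Lemma Series_tail_dominated (a E : nat -> R) c N : 0 <= c ->
  (forall n, Rabs (a n) <= c * E n) -> ex_series E ->
  Rabs (Series a - sum_n a N) <= c * (Series E - sum_n E N).
Proof.
  intros Hc H HE. destruct (Series_dominated a E c Hc H HE) as [Ha _].
  rewrite !Series_minus_sum_n by assumption.
  apply (Series_dominated _ (fun k => E (S N + k)%nat)); auto.
  now apply ex_series_incr_n.
Qed.

Lemma is_lim_seq_Series_tail (a : nat -> R) :
  ex_series a -> is_lim_seq (fun N => Series a - sum_n a N) 0.
Proof.
  intros Ha. replace 0 with (Series a - Series a) by ring.
  apply is_lim_seq_minus'; [apply is_lim_seq_const | exact (Series_correct a Ha)].
Qed.

Lemma Series_finite_support (a : nat -> R) K :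
  (forall k, (K < k)%nat -> a k = 0) -> Series a = sum_n a K.
Proof.
  intros H. apply is_series_unique.
  enough (Hlim : is_lim_seq (sum_n a) (sum_n a K)) by exact Hlim.
  apply (is_lim_seq_ext_loc (fun _ => sum_n a K)); [|apply is_lim_seq_const].
  exists K. intros n Hn. induction Hn as [|n Hn IH]; [reflexivity|].
  rewrite sum_Sn, <- IH, H by lia. symmetry. apply Rplus_0_r.
Qed.

Lemma is_lim_seq_error_bound (u eps : nat -> R) (l : R) :
  (forall N, Rabs (u N - l) <= eps N) -> is_lim_seq eps 0 -> is_lim_seq u l.
Proof.
  intros Hu Heps.
  assert (Hd : is_lim_seq (fun N => u N - l) 0).
  { apply is_lim_seq_abs_0, (is_lim_seq_le_le (fun _ => 0) _ eps); auto using is_lim_seq_const.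
    intros N. split; [apply Rabs_pos | apply Hu]. }
  apply (is_lim_seq_ext (fun N => (u N - l) + l)); [intros; ring|].
  replace (Finite l) with (Finite (0 + l)) by (f_equal; ring).
  apply (is_lim_seq_plus' _ _ 0 l Hd (is_lim_seq_const l)).
Qed.

Lemma is_lim_seq_Series_dominated (f : nat -> nat -> R) (g h eps : nat -> R) :
  (forall N k, Rabs (f N k - g k) <= eps N * h k) -> (forall N, 0 <= eps N) ->
  ex_series h -> ex_series g -> is_lim_seq eps 0 ->
  is_lim_seq (fun N => Series (f N)) (Series g).
Proof.
  intros Hfg Heps Hh Hg Hlim.
  assert (Hd : forall N, ex_series (fun k => f N k - g k)
                         /\ Rabs (Series (fun k => f N k - g k)) <= eps N * Series h)
    by (intros N; apply Series_dominated; auto).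
  assert (Hf : forall N, Series (f N) = Series (fun k => f N k - g k) + Series g).
  { intros N. rewrite Series_minus; [ring| |exact Hg].
    apply (ex_series_ext (fun k => (f N k - g k) + g k));
      [intros k; unfold Rminus; now rewrite Rplus_assoc, Rplus_opp_l, Rplus_0_r|].
    exact (ex_series_plus _ _ (proj1 (Hd N)) Hg). }
  apply (is_lim_seq_error_bound _ (fun N => eps N * Series h)).
  - intros N. rewrite Hf. replace (Series (fun k => f N k - g k) + Series g - Series g)
      with (Series (fun k => f N k - g k)) by ring. apply Hd.
  - replace (Finite 0) with (Rbar_mult 0 (Series h)) by (simpl; f_equal; ring).
    exact (is_lim_seq_scal_r eps (Series h) 0 Hlim).
Qed.

Lemma Series_trunc_estimates (a E : nat -> R) c N : 0 <= c -> (forall n, 0 <= E n) ->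
  (forall n, Rabs (a n) <= c * E n) -> ex_series E ->
  Rabs (Series a - sum_n a N) <= c * (Series E - sum_n E N)
  /\ Rabs (Series a) <= c * Series E /\ Rabs (sum_n a N) <= c * Series E.
Proof.
  intros Hc HE H Hex. split; [|split].
  - now apply Series_tail_dominated.
  - now apply Series_dominated.
  - eapply Rle_trans; [now apply sum_n_dominated|].
    apply Rmult_le_compat_l; [exact Hc | now apply sum_n_le_Series].
Qed.

Definition C1 (f : R -> R) : Prop :=
  exists df : R -> R, (forall x, is_derive f x (df x)) /\ (forall x, continuous df x).

Lemma C1_continuous f x : C1 f -> continuous f x.
Proof. intros [df [Hd _]]. exact (ex_derive_continuous f x (ex_intro _ (df x) (Hd x))). Qed.

Lemma ex_RInt_C1 f a b : C1 f -> ex_RInt f a b.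
Proof.
  intros Hf. apply (ex_RInt_continuous (V := R_CompleteNormedModule)).
  intros. now apply C1_continuous.
Qed.

Lemma is_RInt_C1 f a b : C1 f -> is_RInt f a b (RInt f a b).
Proof. intros Hf. exact (RInt_correct f a b (ex_RInt_C1 f a b Hf)). Qed.

Lemma C1_ext f g : (forall x, f x = g x) -> C1 f -> C1 g.
Proof.
  intros Hfg [df [Hd Hc]]. exists df. split; auto.
  intros x. exact (is_derive_ext f g x (df x) Hfg (Hd x)).
Qed.

Lemma C1_const c : C1 (fun _ => c).
Proof.
  exists (fun _ => 0). split; intros x.
  - exact (is_derive_const c x).
  - exact (continuous_const 0 x).
Qed.

Lemma C1_id : C1 (fun x => x).
Proof.
  exists (fun _ => 1). split; intros x.
  - exact (is_derive_id x).
  - exact (continuous_const 1 x).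
Qed.

Lemma C1_plus f g : C1 f -> C1 g -> C1 (fun x => f x + g x).
Proof.
  intros [df [Hf Hf']] [dg [Hg Hg']]. exists (fun x => df x + dg x). split; intros x.
  - exact (is_derive_plus f g x _ _ (Hf x) (Hg x)).
  - exact (continuous_plus df dg x (Hf' x) (Hg' x)).
Qed.

Lemma C1_mult f g : C1 f -> C1 g -> C1 (fun x => f x * g x).
Proof.
  intros Cf Cg.
  pose proof (fun x => C1_continuous f x Cf) as Ff.
  pose proof (fun x => C1_continuous g x Cg) as Fg.
  destruct Cf as [df [Hf Hf']], Cg as [dg [Hg Hg']].
  exists (fun x => df x * g x + f x * dg x). split; intros x.
  - exact (is_derive_mult f g x _ _ (Hf x) (Hg x) Rmult_comm).
  - exact (continuous_plus _ _ x (continuous_mult _ _ x (Hf' x) (Fg x))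
                                 (continuous_mult _ _ x (Ff x) (Hg' x))).
Qed.

Lemma C1_scal c f : C1 f -> C1 (fun x => c * f x).
Proof. intros; apply C1_mult; auto using C1_const. Qed.

Lemma C1_comp f g : C1 f -> C1 g -> C1 (fun x => g (f x)).
Proof.
  intros Cf Cg. pose proof (fun x => C1_continuous f x Cf) as Ff.
  destruct Cf as [df [Hf Hf']], Cg as [dg [Hg Hg']].
  exists (fun x => df x * dg (f x)). split; intros x.
  - exact (is_derive_comp g f x _ _ (Hg (f x)) (Hf x)).
  - exact (continuous_mult _ _ x (Hf' x) (continuous_comp f dg x (Ff x) (Hg' (f x)))).
Qed.

Lemma C1_sin : C1 sin.
Proof. exists cos. split; intros x; [apply is_derive_sin | apply continuous_cos]. Qed.

Lemma C1_cos : C1 cos.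
Proof.
  exists (fun x => - sin x). split; intros x; [apply is_derive_cos|].
  exact (continuous_opp sin x (continuous_sin x)).
Qed.

Lemma C1_pow n : C1 (fun y => y ^ n).
Proof.
  induction n as [|n IH]; [exact (C1_const 1)|].
  exact (C1_mult _ _ C1_id IH).
Qed.

Lemma C1_inv f : (forall x, f x <> 0) -> C1 f -> C1 (fun x => / f x).
Proof.
  intros Hn Cf.
  pose proof (fun x => C1_continuous _ x (C1_comp f _ Cf (C1_pow 2))) as Ff2.
  destruct Cf as [df [Hf Hf']].
  exists (fun x => - df x * / f x ^ 2). split; intros x; [now apply is_derive_inv|].
  exact (continuous_mult _ _ x (continuous_opp df x (Hf' x))
           (continuous_Rinv_comp _ x (Ff2 x) (pow_nonzero _ 2 (Hn x)))).
Qed.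

Lemma C1_sum_n (f : nat -> R -> R) K :
  (forall k, C1 (f k)) -> C1 (fun x => sum_n (fun k => f k x) K).
Proof.
  intros Hf. induction K as [|K IH].
  - apply (C1_ext (f 0%nat)); [intros; now rewrite sum_O | auto].
  - apply (C1_ext (fun x => sum_n (fun k => f k x) K + f (S K) x));
      [intros; now rewrite sum_Sn | now apply C1_plus].
Qed.

(** * The Jacobi matrix and its generalized eigenvectors *)

Fixpoint jacobi_poly (B C : R) (n : nat) (x : R) : R :=
  match n with
  | O => 1
  | S O => x / C
  | S ((S m) as n') =>
      (x * jacobi_poly B C n' x - offdiag B C m * jacobi_poly B C m x) / B
  end.

Definition eigenfun (B C : R) (k : nat) (x : R) : R :=
  sin x * jacobi_poly B C k (2 * B * cos x).

Lemma applyH_ext B C (v w : nat -> R) k :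
  (forall m, v m = w m) -> applyH B C v k = applyH B C w k.
Proof. intros Hvw. destruct k; simpl; rewrite !Hvw; auto. Qed.

Lemma applyH_scal_l B C (c : R) (v : nat -> R) k :
  applyH B C (fun m => c * v m) k = c * applyH B C v k.
Proof. destruct k; simpl; ring. Qed.

Lemma applyH_scal_r B C (v : nat -> R) (c : R) k :
  applyH B C (fun m => v m * c) k = applyH B C v k * c.
Proof. destruct k; simpl; ring. Qed.

Lemma applyH_jacobi_poly B C x k : B <> 0 -> C <> 0 ->
  applyH B C (fun m => jacobi_poly B C m x) k = x * jacobi_poly B C k x.
Proof. intros HB HC. destruct k as [|[|k]]; simpl; field; auto. Qed.

Lemma applyH_eigenfun B C x k : B <> 0 -> C <> 0 ->
  applyH B C (fun m => eigenfun B C m x) k = 2 * B * cos x * eigenfun B C k x.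
Proof.
  intros HB HC. unfold eigenfun. rewrite applyH_scal_l, applyH_jacobi_poly by auto. ring.
Qed.

Lemma Hpow_e_support B C j n k : (j + n < k)%nat -> Hpow_e B C j n k = 0.
Proof.
  revert k. induction n as [|n IH]; intros k Hk; simpl.
  - unfold basis_vec. destruct (Nat.eqb_spec k j); [lia|auto].
  - destruct k as [|k]; [lia|]. simpl applyH. rewrite !IH by lia. ring.
Qed.

Lemma Hpow_e_parity B C j n k : Nat.even (j + n + k) = false -> Hpow_e B C j n k = 0.
Proof.
  revert k. induction n as [|n IH]; intros k Hk; simpl.
  - unfold basis_vec. destruct (Nat.eqb_spec k j) as [->|]; auto.
    replace (j + 0 + j)%nat with (2 * j)%nat in Hk by lia.
    now rewrite Nat.even_mul in Hk.
  - assert (Hodd : forall k', (S k' = k \/ k' = S k)%nat -> Hpow_e B C j n k' = 0).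
    { intros k' [<- | ->]; apply IH; rewrite <- Hk.
      - replace (j + S n + S k')%nat with (S (S (j + n + k'))) by lia. reflexivity.
      - f_equal; lia. }
    destruct k as [|k]; simpl applyH; rewrite !Hodd by lia; ring.
Qed.

(** A square-summable envelope of every [H^n e_j], up to the factor [(3 (B + C))^n]. *)
Definition decay (j k : nat) : R := 2 ^ j * (/ 2) ^ k.

Lemma decay_pos j k : 0 < decay j k.
Proof. unfold decay. apply Rmult_lt_0_compat; apply pow_lt; lra. Qed.

Lemma decay_diag j : decay j j = 1.
Proof.
  unfold decay. rewrite <- Rpow_mult_distr, Rinv_r, pow1 by lra. reflexivity.
Qed.

Lemma ex_series_decay_sq j : ex_series (fun k => decay j k ^ 2).
Proof.
  assert (E : forall k, (2 ^ j) ^ 2 * (/ 4) ^ k = decay j k ^ 2).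
  { intros k. unfold decay. replace (/ 4) with ((/ 2) ^ 2) by field.
    rewrite Rpow_mult_distr, <- !pow_mult. now replace (k * 2)%nat with (2 * k)%nat by lia. }
  apply (ex_series_ext _ _ E), (ex_series_scal_l (K := R_AbsRing) (V := R_NormedModule)).
  exists (/ (1 - / 4)). apply is_series_geom. rewrite Rabs_pos_eq; lra.
Qed.

Lemma applyH_decay_bound B C (v : nat -> R) M j : 0 < B -> 0 < C -> 0 <= M ->
  (forall k, Rabs (v k) <= M * decay j k) ->
  forall k, Rabs (applyH B C v k) <= 3 * (B + C) * M * decay j k.
Proof.
  intros HB HC HM Hv k.
  assert (Hd : forall k, decay j (S k) = decay j k / 2)
    by (intros; unfold decay; simpl; field).
  destruct k as [|k]; simpl applyH.
  - specialize (Hv 1%nat). rewrite Hd in Hv. pose proof (decay_pos j 0).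
    rewrite Rabs_mult, Rabs_pos_eq by (simpl; lra). simpl offdiag.
    assert (0 <= Rabs (v 1%nat)) by apply Rabs_pos. nra.
  - pose proof (Hv k) as Hk. pose proof (Hv (S (S k))) as Hk2.
    rewrite 2!Hd in Hk2. rewrite Hd. pose proof (decay_pos j k).
    assert (Ha : 0 < offdiag B C k <= B + C) by (destruct k; simpl; lra).
    eapply Rle_trans; [apply Rabs_triang|].
    rewrite !Rabs_mult, (Rabs_pos_eq (offdiag B C k)), (Rabs_pos_eq B) by lra.
    assert (offdiag B C k * Rabs (v k) <= (B + C) * (M * decay j k))
      by (apply Rmult_le_compat; try lra; apply Rabs_pos).
    assert (B * Rabs (v (S (S k))) <= B * (M * (decay j k / 2 / 2)))
      by (apply Rmult_le_compat_l; lra).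
    assert (0 <= M * decay j k) by (apply Rmult_le_pos; lra). nra.
Qed.

Lemma Hpow_e_bound B C j n k : 0 < B -> 0 < C ->
  Rabs (Hpow_e B C j n k) <= (3 * (B + C)) ^ n * decay j k.
Proof.
  intros HB HC. revert k. induction n as [|n IH]; intros k; simpl Hpow_e.
  - unfold basis_vec. rewrite pow_O. pose proof (decay_pos j k).
    destruct (Nat.eqb_spec k j) as [->|]; rewrite ?decay_diag, ?Rabs_R1, ?Rabs_R0; lra.
  - rewrite <- tech_pow_Rmult. apply applyH_decay_bound; auto. apply pow_le; lra.
Qed.

Lemma green_identity B C (v w : nat -> R) K :
  sum_n (fun k => applyH B C v k * w k - v k * applyH B C w k) K =
  offdiag B C K * (v (S K) * w K - v K * w (S K)).
Proof.
  induction K as [|K IH]; [rewrite sum_O; simpl; ring|].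
  rewrite sum_Sn, IH. unfold plus; simpl. ring.
Qed.

Lemma sum_Hpow_e_eigenfun B C j n K x : B <> 0 -> C <> 0 -> (j + n <= K)%nat ->
  sum_n (fun k => Hpow_e B C j n k * eigenfun B C k x) K
  = (2 * B * cos x) ^ n * eigenfun B C j x.
Proof.
  intros HB HC. revert K. induction n as [|n IH]; intros K HK; simpl Hpow_e.
  - rewrite <- (sum_n_kronecker (fun k => eigenfun B C k x) j K), pow_O, Rmult_1_l by lia.
    apply sum_n_ext_R. intros k _. unfold basis_vec. destruct (k =? j); ring.
  - pose proof (green_identity B C (Hpow_e B C j n) (fun m => eigenfun B C m x) K) as G.
    rewrite sum_n_Rminus, (Hpow_e_support B C j n (S K)), (Hpow_e_support B C j n K) in G
      by lia.
    assert (E : forall k, Hpow_e B C j n k * applyH B C (fun m => eigenfun B C m x) k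
                          = 2 * B * cos x * (Hpow_e B C j n k * eigenfun B C k x))
      by (intros k; rewrite applyH_eigenfun by auto; ring).
    rewrite (sum_n_ext_R _ _ K (fun k _ => E k)) in G.
    rewrite sum_n_Rmult_l, IH in G by lia. simpl pow. lra.
Qed.

Lemma applyH_next_determined B C (v w : nat -> R) k : offdiag B C k <> 0 ->
  (forall m, (m <= k)%nat -> v m = w m) -> applyH B C v k = applyH B C w k ->
  v (S k) = w (S k).
Proof.
  intros Ha Hvw E. apply (Rmult_eq_reg_l (offdiag B C k)); auto.
  destruct k as [|k]; cbn [applyH] in E; [exact E|].
  rewrite (Hvw k) in E by lia. lra.
Qed.

Lemma applyH_basis_vec_sym B C k l :
  applyH B C (basis_vec k) l = applyH B C (fun m => basis_vec m l) k.
Proof.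
  unfold basis_vec. destruct k as [|k], l as [|l]; cbn [applyH];
  repeat match goal with |- context [Nat.eqb ?a ?b] => destruct (Nat.eqb_spec a b) end;
  subst; try lia; simpl; ring.
Qed.

Lemma sum_Hpow_e_comb_eigenfun B C j (c : nat -> R) (deg : nat -> nat) N K x :
  B <> 0 -> C <> 0 -> (forall m, (m <= N)%nat -> (j + deg m <= K)%nat) ->
  sum_n (fun k => sum_n (fun m => c m * Hpow_e B C j (deg m) k) N * eigenfun B C k x) K
  = sum_n (fun m => c m * (2 * B * cos x) ^ deg m) N * eigenfun B C j x.
Proof.
  intros HB HC Hdeg.
  rewrite (sum_n_ext_R _ (fun k => sum_n (fun m => c m * (Hpow_e B C j (deg m) k
                                                        * eigenfun B C k x)) N))
    by (intros; rewrite <- sum_n_Rmult_r; apply sum_n_ext_R; intros; ring).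
  rewrite sum_n_switch, <- sum_n_Rmult_r. apply sum_n_ext_R. intros m Hm.
  rewrite sum_n_Rmult_l, sum_Hpow_e_eigenfun by auto. ring.
Qed.
Lemma C1_jacobi_poly B C n : C1 (jacobi_poly B C n).
Proof.
  enough (H : C1 (jacobi_poly B C n) /\ C1 (jacobi_poly B C (S n))) by apply H.
  induction n as [|n [IH IH']]; split; auto.
  - exact (C1_const 1).
  - apply (C1_ext (fun x => x * / C)); [reflexivity|].
    exact (C1_mult _ _ C1_id (C1_const _)).
  - apply (C1_ext (fun x => (x * jacobi_poly B C (S n) x
                             + - offdiag B C n * jacobi_poly B C n x) * / B));
      [intros x; simpl; unfold Rdiv; ring|].
    apply C1_mult; [|apply C1_const].
    apply C1_plus; [exact (C1_mult _ _ C1_id IH') | now apply C1_scal].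
Qed.

Lemma C1_eigenfun B C k : C1 (eigenfun B C k).
Proof.
  apply (C1_mult _ _ C1_sin).
  apply (C1_comp (fun x => 2 * B * cos x)); [apply C1_scal, C1_cos | apply C1_jacobi_poly].
Qed.

(** * Moments of the Poisson kernel *)

Definition poisson_den (r t : R) : R := 1 - 2 * r * cos (2 * t) + r ^ 2.

Definition poisson_kernel (r : R) (k : nat) (t : R) : R := cos (INR k * t) / poisson_den r t.

Definition poisson_moment (r : R) (k : nat) : R := RInt (poisson_kernel r k) 0 PI.

Lemma poisson_den_lower r t : (1 - Rabs r) ^ 2 <= poisson_den r t.
Proof.
  unfold poisson_den. rewrite <- (pow2_abs r).
  assert (r * cos (2 * t) <= Rabs r).
  { eapply Rle_trans; [apply Rle_abs|]. rewrite Rabs_mult.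
    pose proof (Rabs_pos r). assert (Rabs (cos (2 * t)) <= 1) by apply Rabs_le, COS_bound.
    nra. }
  nra.
Qed.

Lemma poisson_den_pos r t : Rabs r < 1 -> 0 < poisson_den r t.
Proof.
  intros Hr. eapply Rlt_le_trans; [|apply poisson_den_lower]. apply pow_lt. lra.
Qed.

Lemma C1_poisson_den r : C1 (poisson_den r).
Proof.
  apply (C1_ext (fun t => (1 + r ^ 2) + (- 2 * r) * cos (2 * t)));
    [intros; unfold poisson_den; ring|].
  apply C1_plus; [apply C1_const|]. apply C1_scal.
  apply (C1_comp (fun t => 2 * t)); [apply C1_scal, C1_id | apply C1_cos].
Qed.

Lemma ex_RInt_poisson_kernel r k : Rabs r < 1 -> ex_RInt (poisson_kernel r k) 0 PI.
Proof.
  intros Hr. apply ex_RInt_C1. apply C1_mult.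
  - apply (C1_comp (fun t => INR k * t)); [apply C1_scal, C1_id | apply C1_cos].
  - apply C1_inv; [intros t; apply Rgt_not_eq, poisson_den_pos, Hr | apply C1_poisson_den].
Qed.

Lemma RInt_lincomb3 (f g h : R -> R) a b c x y :
  ex_RInt f x y -> ex_RInt g x y -> ex_RInt h x y ->
  RInt (fun t => a * f t + b * g t + c * h t) x y
  = a * RInt f x y + b * RInt g x y + c * RInt h x y.
Proof.
  intros Hf Hg Hh. apply is_RInt_unique.
  apply (is_RInt_plus (fun t => a * f t + b * g t) (fun t => c * h t));
    [apply (is_RInt_plus (fun t => a * f t) (fun t => b * g t))|].
  - exact (is_RInt_scal f x y a _ (RInt_correct f x y Hf)).
  - exact (is_RInt_scal g x y b _ (RInt_correct g x y Hg)).
  - exact (is_RInt_scal h x y c _ (RInt_correct h x y Hh)).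
Qed.

Lemma RInt_cos_nat (k : nat) :
  RInt (fun t => cos (INR k * t)) 0 PI = if Nat.eqb k 0 then PI else 0.
Proof.
  destruct k as [|k]; simpl Nat.eqb.
  - rewrite (RInt_ext_R _ (fun _ => 1)), RInt_const; [unfold scal; simpl; unfold mult; simpl; ring|].
    intros. now rewrite Rmult_0_l, cos_0.
  - assert (Hk : INR (S k) <> 0) by (apply not_0_INR; lia).
    assert (Hs : sin (INR (S k) * PI) = 0).
    { apply sin_eq_0_1. exists (Z.of_nat (S k)). now rewrite <- INR_IZR_INZ. }
    revert Hk Hs. generalize (INR (S k)) as m. intros m Hm Hs.
    rewrite (is_RInt_unique (fun t => cos (m * t)) 0 PI (sin (m * PI) / m - sin (m * 0) / m)).
    { apply Rminus_diag_eq. now rewrite Rmult_0_r, sin_0, Hs. }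
    apply (is_RInt_derive (fun t => sin (m * t) / m)).
    + intros x _. auto_derive; [auto | field; auto].
    + intros x _. apply C1_continuous.
      apply (C1_comp (fun t => m * t)); [apply C1_scal, C1_id | apply C1_cos].
Qed.

Lemma cos_add_sub_twice a t : cos (a + 2 * t) + cos (a - 2 * t) = 2 * cos a * cos (2 * t).
Proof. rewrite cos_plus, cos_minus. ring. Qed.

Lemma geometric_decay_eq_0 (x b r : R) :
  Rabs r < 1 -> (forall n, Rabs x <= Rabs r ^ n * b) -> x = 0.
Proof.
  intros Hr Hx. destruct (Req_dec x 0) as [|Hx0]; auto. exfalso.
  pose proof (Rabs_pos_lt x Hx0) as Hpos.
  assert (Hb : 0 < b) by (specialize (Hx O); simpl in Hx; lra).
  destruct (pow_lt_1_zero (Rabs r) ltac:(rewrite Rabs_Rabsolu; auto) (Rabs x / b))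
    as [N HN]; [now apply Rdiv_lt_0_compat|].
  specialize (HN N (le_n N)). specialize (Hx N).
  rewrite Rabs_pos_eq in HN by (apply pow_le, Rabs_pos).
  apply (Rmult_lt_compat_r b) in HN; auto. unfold Rdiv in HN.
  rewrite Rmult_assoc, Rinv_l in HN; lra.
Qed.

Section PoissonMoments.

Variable r : R.
Hypothesis Hr : Rabs r < 1.

Lemma poisson_moment_rec k k2 km :
  (forall t, cos (INR k2 * t) + cos (INR km * t) = 2 * cos (INR k * t) * cos (2 * t)) ->
  (1 + r ^ 2) * poisson_moment r k - r * poisson_moment r k2 - r * poisson_moment r km
  = if Nat.eqb k 0 then PI else 0.
Proof.
  intros Hid. unfold poisson_moment.
  transitivity (RInt (fun t => (1 + r ^ 2) * poisson_kernel r k t + (- r) * poisson_kernel r k2 t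
                               + (- r) * poisson_kernel r km t) 0 PI).
  { rewrite RInt_lincomb3 by apply ex_RInt_poisson_kernel, Hr. ring. }
  rewrite <- RInt_cos_nat. apply RInt_ext_R. intros t _. unfold poisson_kernel.
  pose proof (poisson_den_pos r t Hr) as Hd.
  replace (cos (INR km * t)) with (2 * cos (INR k * t) * cos (2 * t) - cos (INR k2 * t))
    by (rewrite <- Hid; ring).
  unfold poisson_den in *. field. lra.
Qed.

Lemma poisson_moment_bound k : Rabs (poisson_moment r k) <= PI / (1 - Rabs r) ^ 2.
Proof.
  unfold poisson_moment. pose proof PI_RGT_0.
  replace (PI / (1 - Rabs r) ^ 2) with ((PI - 0) * / (1 - Rabs r) ^ 2) by (unfold Rdiv; ring).
  apply abs_RInt_le_const; [lra | apply ex_RInt_poisson_kernel, Hr|].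
  intros t _. unfold poisson_kernel, Rdiv.
  pose proof (poisson_den_lower r t). pose proof (poisson_den_pos r t Hr).
  assert (0 < (1 - Rabs r) ^ 2) by (apply pow_lt; lra).
  rewrite Rabs_mult, Rabs_inv, (Rabs_pos_eq (poisson_den r t)) by lra.
  assert (Rabs (cos (INR k * t)) <= 1) by apply Rabs_le, COS_bound.
  assert (/ poisson_den r t <= / (1 - Rabs r) ^ 2) by (apply Rinv_le_contravar; lra).
  assert (0 < / poisson_den r t) by (apply Rinv_0_lt_compat; lra).
  pose proof (Rabs_pos (cos (INR k * t))). nra.
Qed.

Lemma poisson_moment_shift m : poisson_moment r (m + 2) = r * poisson_moment r m.
Proof.
  (* [D m = r * D (m + 2)] by the recurrence, and [D] is bounded, so [D = 0]. *)
  set (D := fun m => poisson_moment r (m + 2) - r * poisson_moment r m).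
  assert (HD : forall m, D m = r * D (m + 2)%nat).
  { intros p. unfold D. replace (p + 2 + 2)%nat with (p + 4)%nat by lia.
    enough ((1 + r ^ 2) * poisson_moment r (p + 2) - r * poisson_moment r (p + 4)
            - r * poisson_moment r p = 0) by lra.
    rewrite poisson_moment_rec; [destruct (Nat.eqb_spec (p + 2) 0); [lia | auto]|].
    intros t. rewrite !plus_INR. simpl INR.
    replace ((INR p + (1 + 1 + 1 + 1)) * t) with ((INR p + (1 + 1)) * t + 2 * t) by ring.
    replace (INR p * t) with ((INR p + (1 + 1)) * t - 2 * t) by ring.
    apply cos_add_sub_twice. }
  assert (HDn : forall n m, D m = r ^ n * D (m + 2 * n)%nat).
  { induction n as [|n IH]; intros p; [simpl; rewrite Nat.add_0_r; ring|].
    rewrite IH, HD. replace (p + 2 * n + 2)%nat with (p + 2 * S n)%nat by lia. simpl. ring. }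
  assert (HDb : forall m, Rabs (D m) <= (1 + Rabs r) * (PI / (1 - Rabs r) ^ 2)).
  { intros p. unfold D. eapply Rle_trans; [apply Rabs_triang|].
    rewrite Rabs_Ropp, Rabs_mult.
    pose proof (poisson_moment_bound (p + 2)). pose proof (poisson_moment_bound p).
    pose proof (Rabs_pos r). nra. }
  enough (D m = 0) by (unfold D in *; lra).
  apply (geometric_decay_eq_0 _ ((1 + Rabs r) * (PI / (1 - Rabs r) ^ 2)) _ Hr). intros n.
  rewrite (HDn n m), Rabs_mult, <- RPow_abs.
  apply Rmult_le_compat_l; [apply pow_le, Rabs_pos | apply HDb].
Qed.

Lemma poisson_moment_1 : poisson_moment r 1 = 0.
Proof.
  assert (Hrec : (1 + r ^ 2) * poisson_moment r 1 - r * poisson_moment r 3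
                 - r * poisson_moment r 1 = 0).
  { rewrite poisson_moment_rec; [reflexivity|]. intros t. simpl INR.
    replace ((1 + 1 + 1) * t) with (1 * t + 2 * t) by ring.
    rewrite <- (cos_neg (1 * t)) at 1. replace (- (1 * t)) with (1 * t - 2 * t) by ring.
    apply cos_add_sub_twice. }
  pose proof (poisson_moment_shift 1) as E. simpl in E. rewrite E in Hrec.
  assert (r <> 1) by (intros ->; rewrite Rabs_R1 in Hr; lra).
  apply (Rmult_eq_reg_l (1 - r)); [|lra]. lra.
Qed.

Lemma poisson_moment_0 : poisson_moment r 0 * (1 - r ^ 2) = PI.
Proof.
  assert (Hrec : (1 + r ^ 2) * poisson_moment r 0 - r * poisson_moment r 2
                 - r * poisson_moment r 2 = PI).
  { rewrite poisson_moment_rec; [reflexivity|]. intros t. simpl INR.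
    replace ((1 + 1) * t) with (0 * t + 2 * t) by ring.
    rewrite <- (cos_neg (0 * t + 2 * t)) at 2.
    replace (- (0 * t + 2 * t)) with (0 * t - 2 * t) by ring.
    apply cos_add_sub_twice. }
  pose proof (poisson_moment_shift 0) as E. simpl in E. rewrite E in Hrec. lra.
Qed.

End PoissonMoments.

(** * Orthonormality of the generalized eigenvectors *)

Definition weight_param (B C : R) : R := C ^ 2 / B ^ 2 - 1.

(** [sin x ^ 2 * spectral_weight B C x] is the density of the spectral measure of [e_0]
    pulled back by [x |-> 2B cos x]; [|weight_param B C| < 1] exactly when
    [0 < C < sqrt 2 * B], i.e. when [H] has no bound states. *)
Definition spectral_weight (B C x : R) : R :=
  2 * (1 + weight_param B C) / PI / poisson_den (weight_param B C) x.

Definition gram (B C : R) (k l : nat) : R :=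
  RInt (fun x => eigenfun B C k x * eigenfun B C l x * spectral_weight B C x) 0 PI.

Lemma weight_param_bound B C : 0 < B -> 0 < C -> C < sqrt 2 * B ->
  Rabs (weight_param B C) < 1.
Proof.
  intros HB HC HCB. unfold weight_param.
  assert (HB2 : 0 < B ^ 2) by (apply pow_lt; lra).
  assert (H2 : C ^ 2 < 2 * B ^ 2).
  { replace (2 * B ^ 2) with ((sqrt 2 * B) ^ 2)
      by (rewrite Rpow_mult_distr, pow2_sqrt by lra; ring).
    pose proof (sqrt_pos 2). nra. }
  assert (0 < C ^ 2 / B ^ 2) by (apply Rdiv_lt_0_compat; [apply pow_lt|]; lra).
  assert (C ^ 2 / B ^ 2 < 2).
  { apply (Rmult_lt_reg_r (B ^ 2)); [lra|].
    unfold Rdiv. rewrite Rmult_assoc, Rinv_l; lra. }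
  apply Rabs_def1; lra.
Qed.

Lemma sin_add_sub a t : sin (a + t) + sin (a - t) = 2 * sin a * cos t.
Proof. rewrite sin_plus, sin_minus. ring. Qed.

Lemma sin_mul_sin a b : sin a * sin b = (cos (a - b) - cos (a + b)) / 2.
Proof. rewrite cos_minus, cos_plus. field. Qed.

Lemma applyH_RInt B C (F : nat -> R -> R) a b k : (forall m, ex_RInt (F m) a b) ->
  applyH B C (fun m => RInt (F m) a b) k = RInt (fun t => applyH B C (fun m => F m t) k) a b.
Proof.
  intros HF. symmetry. apply is_RInt_unique. destruct k as [|k]; cbn [applyH].
  - exact (is_RInt_scal _ _ _ _ _ (RInt_correct _ _ _ (HF 1%nat))).
  - apply (is_RInt_plus (fun t => offdiag B C k * F k t) (fun t => offdiag B C (S k) * F (S (S k)) t)).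
    + exact (is_RInt_scal _ _ _ _ _ (RInt_correct _ _ _ (HF k))).
    + exact (is_RInt_scal _ _ _ _ _ (RInt_correct _ _ _ (HF (S (S k))))).
Qed.

Section Spectral.

Variables B C : R.
Hypothesis HB : 0 < B.
Hypothesis HC : 0 < C.
Local Notation r := (weight_param B C).

Lemma one_add_weight_param : 1 + r = C ^ 2 / B ^ 2.
Proof. unfold weight_param. ring. Qed.

Lemma eigenfun_succ_sines m t :
  eigenfun B C (S m) t = B / C * (sin ((INR m + 2) * t) - r * sin (INR m * t)).
Proof.
  induction m as [m IH] using lt_wf_ind. destruct m as [|[|m]].
  - unfold eigenfun. simpl jacobi_poly. simpl INR.
    rewrite Rmult_0_l, sin_0, Rplus_0_l, sin_2a. field. lra.
  - unfold eigenfun, weight_param. simpl jacobi_poly. simpl INR.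
    replace ((1 + 2) * t) with (2 * t + t) by ring.
    rewrite Rmult_1_l, sin_plus, sin_2a, cos_2a_cos.
    pose proof (sin2_cos2 t). unfold Rsqr in *. field. lra.
  - assert (Hrec : eigenfun B C (S (S (S m))) t
                   = 2 * cos t * eigenfun B C (S (S m)) t - eigenfun B C (S m) t).
    { pose proof (applyH_eigenfun B C t (S (S m))) as E. cbn [applyH offdiag] in E.
      apply (Rmult_eq_reg_l B); [|lra]. lra. }
    rewrite Hrec, !IH by lia. rewrite !S_INR. set (a := INR m * t).
    replace ((INR m + 1 + 1 + 2) * t) with (a + 4 * t) by (unfold a; ring).
    replace ((INR m + 1 + 2) * t) with (a + 3 * t) by (unfold a; ring).
    replace ((INR m + 1 + 1) * t) with (a + 2 * t) by (unfold a; ring).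
    replace ((INR m + 2) * t) with (a + 2 * t) by (unfold a; ring).
    replace ((INR m + 1) * t) with (a + t) by (unfold a; ring).
    assert (E4 : sin (a + 4 * t) = 2 * sin (a + 3 * t) * cos t - sin (a + 2 * t)).
    { rewrite <- sin_add_sub. replace (a + 3 * t + t) with (a + 4 * t) by ring.
      replace (a + 3 * t - t) with (a + 2 * t) by ring. ring. }
    assert (E2 : sin (a + 2 * t) = 2 * sin (a + t) * cos t - sin a).
    { rewrite <- sin_add_sub. replace (a + t + t) with (a + 2 * t) by ring.
      replace (a + t - t) with a by ring. ring. }
    rewrite E4, E2. field. lra.
Qed.

Hypothesis Hr : Rabs r < 1.

Lemma spectral_weight_pos x : 0 < spectral_weight B C x.
Proof.
  unfold spectral_weight. rewrite one_add_weight_param.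
  pose proof PI_RGT_0. pose proof (poisson_den_pos r x Hr).
  assert (0 < C ^ 2 / B ^ 2) by (apply Rdiv_lt_0_compat; apply pow_lt; lra).
  repeat apply Rdiv_lt_0_compat; lra.
Qed.

Lemma C1_spectral_weight : C1 (spectral_weight B C).
Proof.
  apply (C1_ext (fun x => 2 * (1 + r) / PI * / poisson_den r x)); [reflexivity|].
  apply C1_scal, C1_inv; [intros x; apply Rgt_not_eq, poisson_den_pos, Hr|].
  apply C1_poisson_den.
Qed.

Lemma ex_RInt_gram k l :
  ex_RInt (fun x => eigenfun B C k x * eigenfun B C l x * spectral_weight B C x) 0 PI.
Proof.
  apply ex_RInt_C1, C1_mult; [apply C1_mult; apply C1_eigenfun | apply C1_spectral_weight].
Qed.

Lemma gram_0_0 : gram B C 0 0 = 1.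
Proof.
  pose proof PI_RGT_0. unfold gram.
  rewrite (RInt_ext_R _ (fun t => (1 + r) / PI * poisson_kernel r 0 t
                                 + (- ((1 + r) / PI)) * poisson_kernel r 2 t
                                 + 0 * poisson_kernel r 2 t)).
  - rewrite RInt_lincomb3 by apply ex_RInt_poisson_kernel, Hr.
    fold (poisson_moment r 0) (poisson_moment r 2).
    pose proof (poisson_moment_shift r Hr 0) as E. simpl in E. rewrite E.
    transitivity (poisson_moment r 0 * (1 - r ^ 2) / PI); [field; lra|].
    rewrite poisson_moment_0 by exact Hr. field. lra.
  - intros t _. pose proof (poisson_den_pos r t Hr).
    unfold eigenfun, spectral_weight, poisson_kernel. simpl jacobi_poly. simpl INR.
    replace ((1 + 1) * t) with (2 * t) by ring.
    rewrite Rmult_0_l, cos_0, cos_2a_sin. unfold Rsqr. field. lra.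
Qed.

Lemma gram_0_1 : gram B C 0 1 = 0.
Proof.
  pose proof PI_RGT_0. set (al := B * (1 + r) / (C * PI)). unfold gram.
  rewrite (RInt_ext_R _ (fun t => al * poisson_kernel r 1 t + (- al) * poisson_kernel r 3 t
                                 + 0 * poisson_kernel r 3 t)).
  - rewrite RInt_lincomb3 by apply ex_RInt_poisson_kernel, Hr.
    fold (poisson_moment r 1) (poisson_moment r 3).
    pose proof (poisson_moment_shift r Hr 1) as E. simpl in E.
    rewrite E, poisson_moment_1 by exact Hr. ring.
  - intros t _. pose proof (poisson_den_pos r t Hr). rewrite eigenfun_succ_sines.
    unfold eigenfun, spectral_weight, poisson_kernel, al. simpl jacobi_poly. simpl INR.
    rewrite Rmult_0_l, sin_0, Rplus_0_l, Rmult_1_l.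
    replace ((1 + 1 + 1) * t) with (2 * t + t) by ring.
    rewrite cos_plus, sin_2a, cos_2a_sin. field. lra.
Qed.

Lemma gram_0_succ_succ p : gram B C 0 (S (S p)) = 0.
Proof.
  pose proof PI_RGT_0. set (al := B * (1 + r) / (C * PI)). unfold gram.
  rewrite (RInt_ext_R _ (fun t => (al * (1 + r)) * poisson_kernel r (p + 2) t
                                 + (- al) * poisson_kernel r (p + 4) t
                                 + (- al * r) * poisson_kernel r p t)).
  - rewrite RInt_lincomb3 by apply ex_RInt_poisson_kernel, Hr.
    fold (poisson_moment r (p + 2)) (poisson_moment r (p + 4)) (poisson_moment r p).
    pose proof (poisson_moment_shift r Hr (p + 2)) as E.
    replace (p + 2 + 2)%nat with (p + 4)%nat in E by lia.
    rewrite E, (poisson_moment_shift r Hr p). ring.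
  - intros t _. pose proof (poisson_den_pos r t Hr). rewrite eigenfun_succ_sines.
    unfold eigenfun, spectral_weight, poisson_kernel, al. simpl jacobi_poly.
    rewrite !plus_INR, S_INR. simpl INR. set (a := INR p * t).
    replace ((INR p + 1 + 2) * t) with (a + 3 * t) by (unfold a; ring).
    replace ((INR p + 1) * t) with (a + t) by (unfold a; ring).
    replace ((INR p + (1 + 1)) * t) with (a + 2 * t) by (unfold a; ring).
    replace ((INR p + (1 + 1 + 1 + 1)) * t) with (a + 4 * t) by (unfold a; ring).
    assert (E3 : sin t * sin (a + 3 * t) = (cos (a + 2 * t) - cos (a + 4 * t)) / 2)
      by (rewrite Rmult_comm, sin_mul_sin; do 3 f_equal; ring).
    assert (E1 : sin t * sin (a + t) = (cos a - cos (a + 2 * t)) / 2)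
      by (rewrite Rmult_comm, sin_mul_sin; do 3 f_equal; ring).
    transitivity (B / C * (2 * (1 + r) / PI / poisson_den r t)
                  * (sin t * sin (a + 3 * t) - r * (sin t * sin (a + t)))); [field; lra|].
    rewrite E3, E1. field. lra.
Qed.

Lemma gram_applyH_sym k l :
  applyH B C (fun m => gram B C m l) k = applyH B C (gram B C k) l.
Proof.
  unfold gram. rewrite !applyH_RInt by (intros; apply ex_RInt_gram).
  apply RInt_ext_R. intros t _.
  rewrite (applyH_ext B C _ (fun m => eigenfun B C m t * (eigenfun B C l t * spectral_weight B C t)))
    by (intros; ring).
  rewrite (applyH_ext B C (fun m => eigenfun B C k t * eigenfun B C m t * spectral_weight B C t)
             (fun m => eigenfun B C k t * spectral_weight B C t * eigenfun B C m t))
    by (intros; ring).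
  rewrite applyH_scal_r, applyH_scal_l, !applyH_eigenfun by lra. ring.
Qed.

(** The Gram matrix commutes with [H] and its first row is [e_0]; as the off-diagonal
    entries of [H] do not vanish, it is the identity. *)
Lemma gram_basis_vec k l : gram B C k l = basis_vec k l.
Proof.
  revert l. induction k as [k IH] using lt_wf_ind. intros l. destruct k as [|k].
  - destruct l as [|[|l]]; [apply gram_0_0 | apply gram_0_1 | apply gram_0_succ_succ].
  - apply (applyH_next_determined B C (fun m => gram B C m l) (fun m => basis_vec m l) k).
    + destruct k; simpl; lra.
    + intros m Hm. apply IH. lia.
    + rewrite gram_applyH_sym, <- applyH_basis_vec_sym.
      apply applyH_ext. intros m. apply IH. lia.
Qed.

Lemma eigenfun_norm2 k :
  RInt (fun x => eigenfun B C k x ^ 2 * spectral_weight B C x) 0 PI = 1.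
Proof.
  transitivity (gram B C k k); [apply RInt_ext_R; intros x _; ring|].
  rewrite gram_basis_vec. unfold basis_vec. now rewrite Nat.eqb_refl.
Qed.

End Spectral.

Lemma RInt_sum_n_scal (c : nat -> R) (g : nat -> R -> R) a b K :
  (forall k, ex_RInt (g k) a b) ->
  RInt (fun x => sum_n (fun k => c k * g k x) K) a b = sum_n (fun k => c k * RInt (g k) a b) K.
Proof.
  intros Hg. apply is_RInt_unique. induction K as [|K IH].
  - rewrite sum_O. apply (is_RInt_ext (fun x => c O * g O x)); [intros; now rewrite sum_O|].
    exact (is_RInt_scal _ _ _ _ _ (RInt_correct _ _ _ (Hg O))).
  - rewrite sum_Sn.
    apply (is_RInt_ext (fun x => sum_n (fun k => c k * g k x) K + c (S K) * g (S K) x));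
      [intros; now rewrite sum_Sn|].
    apply (is_RInt_plus _ (fun x => c (S K) * g (S K) x)); [exact IH|].
    exact (is_RInt_scal _ _ _ _ _ (RInt_correct _ _ _ (Hg (S K)))).
Qed.

Lemma parseval_finite B C (a : nat -> R) K :
  0 < B -> 0 < C -> Rabs (weight_param B C) < 1 ->
  sum_n (fun k => a k ^ 2) K
  = RInt (fun x => (sum_n (fun k => a k * eigenfun B C k x) K) ^ 2 * spectral_weight B C x) 0 PI.
Proof.
  intros HB HC Hr. set (F := fun x => sum_n (fun k => a k * eigenfun B C k x) K).
  assert (HF : C1 F) by (apply C1_sum_n; intros; apply C1_scal, C1_eigenfun).
  assert (Hw : C1 (spectral_weight B C)) by (apply C1_spectral_weight; auto).
  assert (Hcoef : forall k, (k <= K)%nat ->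
            RInt (fun x => eigenfun B C k x * F x * spectral_weight B C x) 0 PI = a k).
  { intros k Hk.
    rewrite (RInt_ext_R _
      (fun x => sum_n (fun l => a l * (eigenfun B C k x * eigenfun B C l x
                                       * spectral_weight B C x)) K)).
    - rewrite RInt_sum_n_scal by (intros; apply ex_RInt_gram; auto).
      rewrite <- (sum_n_kronecker a k K Hk). apply sum_n_ext_R. intros l _.
      fold (gram B C k l). rewrite gram_basis_vec by auto. unfold basis_vec.
      destruct (l =? k); ring.
    - intros x _. unfold F. symmetry.
      rewrite (sum_n_ext_R _ (fun l => eigenfun B C k x * spectral_weight B C x
                                       * (a l * eigenfun B C l x))) by (intros; ring).
      rewrite sum_n_Rmult_l. ring. }
  rewrite (RInt_ext_R _
    (fun x => sum_n (fun k => a k * (eigenfun B C k x * F x * spectral_weight B C x)) K)).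
  - rewrite RInt_sum_n_scal.
    + apply sum_n_ext_R. intros k Hk. rewrite Hcoef by exact Hk. ring.
    + intros k. apply ex_RInt_C1, C1_mult; [apply C1_mult|]; auto using C1_eigenfun.
  - intros x _. fold (F x).
    rewrite (sum_n_ext_R _ (fun k => F x * spectral_weight B C x * (a k * eigenfun B C k x)))
      by (intros; ring).
    rewrite sum_n_Rmult_l. fold (F x). ring.
Qed.

(** * Truncated Taylor series *)

Definition exp_term (y : R) (m : nat) : R := y ^ m / INR (fact m).

Definition exp_tail (y : R) (N : nat) : R := Series (exp_term y) - sum_n (exp_term y) N.

Lemma exp_term_nonneg y m : 0 <= y -> 0 <= exp_term y m.
Proof.
  intros Hy. unfold exp_term. apply Rdiv_le_0_compat; [now apply pow_le | apply INR_fact_lt_0].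
Qed.

Lemma ex_series_exp_term y : ex_series (exp_term y).
Proof.
  exists (exp y). eapply is_series_ext; [|exact (is_exp_Reals y)].
  intros n. unfold exp_term. now rewrite pow_n_pow.
Qed.

Lemma exp_tail_nonneg y N : 0 <= y -> 0 <= exp_tail y N.
Proof.
  intros Hy. unfold exp_tail.
  pose proof (sum_n_le_Series (exp_term y) N (fun m => exp_term_nonneg y m Hy)
                (ex_series_exp_term y)). lra.
Qed.

Lemma is_lim_seq_exp_tail y : is_lim_seq (exp_tail y) 0.
Proof. apply is_lim_seq_Series_tail, ex_series_exp_term. Qed.

Lemma pow_div_fact_bound (y X : R) (m e : nat) : Rabs y <= X ->
  Rabs (y ^ (2 * m + e) / INR (fact (2 * m + e))) <= X ^ e * exp_term (X ^ 2) m.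
Proof.
  intros Hy. pose proof (Rabs_pos y).
  pose proof (INR_fact_lt_0 m). pose proof (INR_fact_lt_0 (2 * m + e)).
  unfold exp_term, Rdiv. rewrite Rabs_mult, Rabs_inv, <- RPow_abs, (Rabs_pos_eq (INR _)) by lra.
  replace (X ^ e * ((X ^ 2) ^ m * / INR (fact m))) with (X ^ (2 * m + e) * / INR (fact m))
    by (rewrite pow_add, pow_mult; ring).
  apply Rmult_le_compat; [apply pow_le; lra | left; apply Rinv_0_lt_compat; lra | |].
  - apply pow_incr. lra.
  - apply Rinv_le_contravar; [lra|]. apply le_INR, fact_le. lia.
Qed.

Lemma pow_even_div_fact_bound y X m : Rabs y <= X ->
  Rabs (y ^ (2 * m) / INR (fact (2 * m))) <= exp_term (X ^ 2) m.
Proof.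
  intros Hy. pose proof (pow_div_fact_bound y X m 0 Hy) as H.
  now rewrite Nat.add_0_r, pow_O, Rmult_1_l in H.
Qed.

Lemma pow_odd_div_fact_bound y X m : Rabs y <= X ->
  Rabs (y ^ (2 * m + 1) / INR (fact (2 * m + 1))) <= X * exp_term (X ^ 2) m.
Proof. intros Hy. pose proof (pow_div_fact_bound y X m 1 Hy) as H. now rewrite pow_1 in H. Qed.

Lemma Rabs_alt_sign_mult m (a : R) : Rabs ((-1) ^ m * a) = Rabs a.
Proof. now rewrite Rabs_mult, pow_1_abs, Rmult_1_l. Qed.

Definition cos_trunc (N : nat) (y : R) : R :=
  sum_n (fun m => (-1) ^ m * y ^ (2 * m) / INR (fact (2 * m))) N.

Definition sin_trunc (N : nat) (y : R) : R :=
  sum_n (fun m => (-1) ^ m * y ^ (2 * m + 1) / INR (fact (2 * m + 1))) N.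

Lemma is_series_cos y :
  is_series (fun m => (-1) ^ m * y ^ (2 * m) / INR (fact (2 * m))) (cos y).
Proof.
  unfold cos. destruct (exist_cos (Rsqr y)) as [a Ha].
  assert (E : forall n, cos_n n * Rsqr y ^ n = (-1) ^ n * y ^ (2 * n) / INR (fact (2 * n))).
  { intros n. unfold cos_n, Rsqr. rewrite pow_mult.
    replace (y ^ 2) with (y * y) by ring. unfold Rdiv. ring. }
  exact (is_series_ext _ _ _ E (proj2 (is_series_Reals _ _) Ha)).
Qed.

Lemma is_series_sin y :
  is_series (fun m => (-1) ^ m * y ^ (2 * m + 1) / INR (fact (2 * m + 1))) (sin y).
Proof.
  unfold sin. destruct (exist_sin (Rsqr y)) as [a Ha].
  assert (E : forall n, y * (sin_n n * Rsqr y ^ n)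
                        = (-1) ^ n * y ^ (2 * n + 1) / INR (fact (2 * n + 1))).
  { intros n. unfold sin_n, Rsqr. replace (n + (n + 0) + 1)%nat with (2 * n + 1)%nat by lia.
    rewrite pow_add, pow_mult. replace (y ^ 2) with (y * y) by ring. unfold Rdiv. ring. }
  exact (is_series_ext _ _ _ E (is_series_scal_l y _ _ (proj2 (is_series_Reals _ _) Ha))).
Qed.

Lemma C1_cos_trunc N : C1 (cos_trunc N).
Proof.
  apply (C1_sum_n (fun m y => (-1) ^ m * y ^ (2 * m) / INR (fact (2 * m)))). intros m.
  apply (C1_ext (fun y => (-1) ^ m / INR (fact (2 * m)) * y ^ (2 * m)));
    [intros; unfold Rdiv; ring | apply C1_scal, C1_pow].
Qed.

Lemma C1_sin_trunc N : C1 (sin_trunc N).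
Proof.
  apply (C1_sum_n (fun m y => (-1) ^ m * y ^ (2 * m + 1) / INR (fact (2 * m + 1)))). intros m.
  apply (C1_ext (fun y => (-1) ^ m / INR (fact (2 * m + 1)) * y ^ (2 * m + 1)));
    [intros; unfold Rdiv; ring | apply C1_scal, C1_pow].
Qed.

Section TrigTruncation.

Variables X y : R.
Hypothesis Hy : Rabs y <= X.

Lemma cos_trunc_estimates N :
  Rabs (cos y - cos_trunc N y) <= exp_tail (X ^ 2) N
  /\ Rabs (cos_trunc N y) <= Series (exp_term (X ^ 2)).
Proof.
  assert (Hdom : forall m, Rabs ((-1) ^ m * y ^ (2 * m) / INR (fact (2 * m)))
                           <= 1 * exp_term (X ^ 2) m).
  { intros m. unfold Rdiv. rewrite Rmult_assoc, Rabs_alt_sign_mult, Rmult_1_l.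
    now apply pow_even_div_fact_bound. }
  destruct (Series_trunc_estimates _ _ 1 N Rle_0_1
              (fun m => exp_term_nonneg _ m (pow2_ge_0 X)) Hdom (ex_series_exp_term _))
    as [Herr [_ Hbnd]].
  rewrite (is_series_unique _ _ (is_series_cos y)), Rmult_1_l in Herr.
  rewrite Rmult_1_l in Hbnd. split; assumption.
Qed.

Lemma sin_trunc_estimates N :
  Rabs (sin y - sin_trunc N y) <= X * exp_tail (X ^ 2) N
  /\ Rabs (sin_trunc N y) <= X * Series (exp_term (X ^ 2)).
Proof.
  assert (HX : 0 <= X) by (pose proof (Rabs_pos y); lra).
  assert (Hdom : forall m, Rabs ((-1) ^ m * y ^ (2 * m + 1) / INR (fact (2 * m + 1)))
                           <= X * exp_term (X ^ 2) m).
  { intros m. unfold Rdiv. rewrite Rmult_assoc, Rabs_alt_sign_mult.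
    now apply pow_odd_div_fact_bound. }
  destruct (Series_trunc_estimates _ _ X N HX
              (fun m => exp_term_nonneg _ m (pow2_ge_0 X)) Hdom (ex_series_exp_term _))
    as [Herr [_ Hbnd]].
  rewrite (is_series_unique _ _ (is_series_sin y)) in Herr. split; assumption.
Qed.

End TrigTruncation.

Lemma Rabs_sqr_sub_le a b e g1 g2 : Rabs (a - b) <= e -> Rabs a <= g1 -> Rabs b <= g2 ->
  Rabs (a ^ 2 - b ^ 2) <= e * (g1 + g2).
Proof.
  intros Hab Ha Hb. replace (a ^ 2 - b ^ 2) with ((a - b) * (a + b)) by ring.
  rewrite Rabs_mult. apply Rmult_le_compat; [apply Rabs_pos | apply Rabs_pos | exact Hab |].
  eapply Rle_trans; [apply Rabs_triang | lra].
Qed.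

Definition cos_double_eps (X : R) (N : nat) : R :=
  exp_tail (X ^ 2) N * (Series (exp_term (X ^ 2)) + 1)
  + X * exp_tail (X ^ 2) N * (X * Series (exp_term (X ^ 2)) + 1).

Lemma cos_double_trunc_error X y N : Rabs y <= X ->
  Rabs (cos_trunc N y ^ 2 - sin_trunc N y ^ 2 - cos (2 * y)) <= cos_double_eps X N.
Proof.
  intros Hy. rewrite cos_2a.
  replace (cos_trunc N y ^ 2 - sin_trunc N y ^ 2 - (cos y * cos y - sin y * sin y))
    with ((cos_trunc N y ^ 2 - cos y ^ 2) - (sin_trunc N y ^ 2 - sin y ^ 2)) by ring.
  eapply Rle_trans; [apply Rabs_triang|]. rewrite Rabs_Ropp. unfold cos_double_eps.
  destruct (cos_trunc_estimates X y Hy N) as [Ec Bc].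
  destruct (sin_trunc_estimates X y Hy N) as [Es Bs].
  rewrite Rabs_minus_sym in Ec, Es.
  assert (Rabs (cos y) <= 1) by apply Rabs_le, COS_bound.
  assert (Rabs (sin y) <= 1) by apply Rabs_le, SIN_bound.
  apply Rplus_le_compat; apply Rabs_sqr_sub_le; assumption.
Qed.

Lemma is_lim_seq_cos_double_eps X : is_lim_seq (cos_double_eps X) 0.
Proof.
  unfold cos_double_eps.
  replace 0 with (0 * (Series (exp_term (X ^ 2)) + 1)
                  + X * 0 * (X * Series (exp_term (X ^ 2)) + 1)) by ring.
  apply is_lim_seq_plus'; apply is_lim_seq_mult'; try apply is_lim_seq_const;
    [|apply is_lim_seq_mult'; [apply is_lim_seq_const|]]; apply is_lim_seq_exp_tail.
Qed.

(** * Spectral representation of the parity *)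

Lemma neg1_pow_parity n : (-1) ^ n = if Nat.even n then 1 else -1.
Proof.
  induction n as [|n IH]; [reflexivity|].
  rewrite <- tech_pow_Rmult, IH, Nat.even_succ, <- Nat.negb_even.
  destruct (Nat.even n); simpl; ring.
Qed.

Section Propagator.

Variables (B C : R) (j : nat) (t : R).
Hypothesis HB : 0 < B.
Hypothesis HC : 0 < C.

Local Notation X := (Rabs t * (3 * (B + C))).
Local Notation expsum := (Series (exp_term (X ^ 2))).

(** Taylor terms of the coordinates of [cos(tH) e_j] and [sin(tH) e_j]; note that
    [psi_im = - sin(tH) e_j]. *)
Definition cosH_term (m k : nat) : R :=
  (-1) ^ m * t ^ (2 * m) / INR (fact (2 * m)) * Hpow_e B C j (2 * m) k.

Definition sinH_term (m k : nat) : R :=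
  (-1) ^ m * t ^ (2 * m + 1) / INR (fact (2 * m + 1)) * Hpow_e B C j (2 * m + 1) k.

Definition cosH_trunc (N k : nat) : R := sum_n (fun m => cosH_term m k) N.

Definition sinH_trunc (N k : nat) : R := sum_n (fun m => sinH_term m k) N.

Lemma taylor_radius_nonneg : 0 <= X.
Proof. apply Rmult_le_pos; [apply Rabs_pos | lra]. Qed.

Lemma Hpow_term_bound n k :
  Rabs (t ^ n / INR (fact n) * Hpow_e B C j n k) <= decay j k * Rabs (X ^ n / INR (fact n)).
Proof.
  pose proof (INR_fact_lt_0 n) as Hf. pose proof (decay_pos j k) as Hd.
  unfold Rdiv at 1. rewrite !Rabs_mult, Rabs_inv, <- RPow_abs,
    (Rabs_pos_eq (INR (fact n))) by lra.
  eapply Rle_trans; [|apply Rmult_le_compat_l; [lra | apply Rle_abs]].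
  replace (decay j k * (X ^ n / INR (fact n)))
    with (Rabs t ^ n * / INR (fact n) * ((3 * (B + C)) ^ n * decay j k))
    by (rewrite (Rpow_mult_distr (Rabs t)); unfold Rdiv; ring).
  apply Rmult_le_compat_l; [|now apply Hpow_e_bound].
  apply Rmult_le_pos; [apply pow_le, Rabs_pos | left; now apply Rinv_0_lt_compat].
Qed.

Lemma cosH_term_bound m k : Rabs (cosH_term m k) <= decay j k * exp_term (X ^ 2) m.
Proof.
  replace (cosH_term m k)
    with ((-1) ^ m * (t ^ (2 * m) / INR (fact (2 * m)) * Hpow_e B C j (2 * m) k))
    by (unfold cosH_term, Rdiv; ring).
  rewrite Rabs_alt_sign_mult. eapply Rle_trans; [apply Hpow_term_bound|].
  apply Rmult_le_compat_l; [apply Rlt_le, decay_pos|].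
  apply pow_even_div_fact_bound. rewrite Rabs_pos_eq; [lra | apply taylor_radius_nonneg].
Qed.

Lemma sinH_term_bound m k : Rabs (sinH_term m k) <= decay j k * X * exp_term (X ^ 2) m.
Proof.
  replace (sinH_term m k)
    with ((-1) ^ m * (t ^ (2 * m + 1) / INR (fact (2 * m + 1)) * Hpow_e B C j (2 * m + 1) k))
    by (unfold sinH_term, Rdiv; ring).
  rewrite Rabs_alt_sign_mult. eapply Rle_trans; [apply Hpow_term_bound|]. rewrite Rmult_assoc.
  apply Rmult_le_compat_l; [apply Rlt_le, decay_pos|].
  apply pow_odd_div_fact_bound. rewrite Rabs_pos_eq; [lra | apply taylor_radius_nonneg].
Qed.

Lemma cosH_trunc_estimates N k :
  Rabs (psi_re B C j t k - cosH_trunc N k) <= decay j k * exp_tail (X ^ 2) N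
  /\ Rabs (psi_re B C j t k) <= decay j k * expsum /\ Rabs (cosH_trunc N k) <= decay j k * expsum.
Proof.
  apply Series_trunc_estimates; [apply Rlt_le, decay_pos | | intros m; apply cosH_term_bound |];
    auto using ex_series_exp_term, exp_term_nonneg, pow2_ge_0.
Qed.

Lemma sinH_trunc_estimates N k :
  Rabs (- psi_im B C j t k - sinH_trunc N k) <= decay j k * X * exp_tail (X ^ 2) N
  /\ Rabs (psi_im B C j t k) <= decay j k * X * expsum
  /\ Rabs (sinH_trunc N k) <= decay j k * X * expsum.
Proof.
  unfold psi_im. rewrite Ropp_involutive, Rabs_Ropp.
  apply Series_trunc_estimates; [| | intros m; apply sinH_term_bound |];
    auto using ex_series_exp_term, exp_term_nonneg, pow2_ge_0.
  apply Rmult_le_pos; [apply Rlt_le, decay_pos | apply taylor_radius_nonneg].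
Qed.

Definition parity_trunc (N : nat) : R :=
  Series (fun k => (-1) ^ k * (cosH_trunc N k ^ 2 + sinH_trunc N k ^ 2)).

Lemma expsum_nonneg : 0 <= expsum.
Proof. apply Series_nonneg; auto using ex_series_exp_term, exp_term_nonneg, pow2_ge_0. Qed.

Lemma parity_term_error N k :
  Rabs ((-1) ^ k * (cosH_trunc N k ^ 2 + sinH_trunc N k ^ 2)
        - (-1) ^ k * (psi_re B C j t k ^ 2 + psi_im B C j t k ^ 2))
  <= 2 * expsum * (1 + X ^ 2) * exp_tail (X ^ 2) N * decay j k ^ 2.
Proof.
  destruct (cosH_trunc_estimates N k) as [Er [Br Br']].
  destruct (sinH_trunc_estimates N k) as [Ei [Bi Bi']].
  rewrite <- Rabs_Ropp in Bi. rewrite Rabs_minus_sym in Er, Ei.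
  pose proof (Rabs_sqr_sub_le _ _ _ _ _ Er Br' Br) as Sr.
  pose proof (Rabs_sqr_sub_le _ _ _ _ _ Ei Bi' Bi) as Si.
  replace ((- psi_im B C j t k) ^ 2) with (psi_im B C j t k ^ 2) in Si by ring.
  replace ((-1) ^ k * (cosH_trunc N k ^ 2 + sinH_trunc N k ^ 2)
           - (-1) ^ k * (psi_re B C j t k ^ 2 + psi_im B C j t k ^ 2))
    with ((-1) ^ k * ((cosH_trunc N k ^ 2 - psi_re B C j t k ^ 2)
                      + (sinH_trunc N k ^ 2 - psi_im B C j t k ^ 2))) by ring.
  rewrite Rabs_alt_sign_mult. eapply Rle_trans; [apply Rabs_triang|].
  replace (2 * expsum * (1 + X ^ 2) * exp_tail (X ^ 2) N * decay j k ^ 2)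
    with (decay j k * exp_tail (X ^ 2) N * (decay j k * expsum + decay j k * expsum)
          + decay j k * X * exp_tail (X ^ 2) N * (decay j k * X * expsum + decay j k * X * expsum))
    by ring.
  lra.
Qed.

Lemma parity_term_bound k :
  Rabs ((-1) ^ k * (psi_re B C j t k ^ 2 + psi_im B C j t k ^ 2))
  <= expsum ^ 2 * (1 + X ^ 2) * decay j k ^ 2.
Proof.
  destruct (cosH_trunc_estimates 0 k) as [_ [Br _]].
  destruct (sinH_trunc_estimates 0 k) as [_ [Bi _]].
  rewrite Rabs_alt_sign_mult, Rabs_pos_eq by (apply Rplus_le_le_0_compat; apply pow2_ge_0).
  rewrite <- (pow2_abs (psi_re B C j t k)), <- (pow2_abs (psi_im B C j t k)).
  assert (Rabs (psi_re B C j t k) ^ 2 <= (decay j k * expsum) ^ 2)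
    by (apply pow_incr; split; [apply Rabs_pos | exact Br]).
  assert (Rabs (psi_im B C j t k) ^ 2 <= (decay j k * X * expsum) ^ 2)
    by (apply pow_incr; split; [apply Rabs_pos | exact Bi]).
  nra.
Qed.

Lemma is_lim_seq_parity_trunc : is_lim_seq parity_trunc (parity_expect B C j t).
Proof.
  pose proof taylor_radius_nonneg. pose proof expsum_nonneg. pose proof (pow2_ge_0 X).
  apply (is_lim_seq_Series_dominated _ _ (fun k => decay j k ^ 2)
           (fun N => 2 * expsum * (1 + X ^ 2) * exp_tail (X ^ 2) N)).
  - apply parity_term_error.
  - intros N. apply Rmult_le_pos; [nra | apply exp_tail_nonneg, pow2_ge_0].
  - apply ex_series_decay_sq.
  - apply (Series_dominated _ (fun k => decay j k ^ 2) (expsum ^ 2 * (1 + X ^ 2)));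
      [nra | apply parity_term_bound | apply ex_series_decay_sq].
  - replace (Finite 0) with (Rbar_mult (2 * expsum * (1 + X ^ 2)) 0) by (simpl; f_equal; ring).
    apply is_lim_seq_scal_l, is_lim_seq_exp_tail.
Qed.

Lemma cosH_trunc_support N k : (j + 2 * N < k)%nat -> cosH_trunc N k = 0.
Proof.
  intros Hk. apply sum_n_eq_0. intros m Hm. unfold cosH_term.
  rewrite Hpow_e_support by lia. ring.
Qed.

Lemma sinH_trunc_support N k : (j + 2 * N + 1 < k)%nat -> sinH_trunc N k = 0.
Proof.
  intros Hk. apply sum_n_eq_0. intros m Hm. unfold sinH_term.
  rewrite Hpow_e_support by lia. ring.
Qed.

Lemma cosH_trunc_parity N k : Nat.even (j + k) = false -> cosH_trunc N k = 0.
Proof.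
  intros Hk. apply sum_n_eq_0. intros m _. unfold cosH_term.
  rewrite Hpow_e_parity; [ring|].
  replace (j + 2 * m + k)%nat with (j + k + 2 * m)%nat by lia.
  now rewrite Nat.even_add_mul_2.
Qed.

Lemma sinH_trunc_parity N k : Nat.even (j + k) = true -> sinH_trunc N k = 0.
Proof.
  intros Hk. apply sum_n_eq_0. intros m _. unfold sinH_term.
  rewrite Hpow_e_parity; [ring|].
  replace (j + (2 * m + 1) + k)%nat with (S (j + k + 2 * m)) by lia.
  now rewrite Nat.even_succ, <- Nat.negb_even, Nat.even_add_mul_2, Hk.
Qed.

Lemma parity_trunc_term N k :
  (-1) ^ k * (cosH_trunc N k ^ 2 + sinH_trunc N k ^ 2)
  = (-1) ^ j * (cosH_trunc N k ^ 2 - sinH_trunc N k ^ 2).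
Proof.
  pose proof (cosH_trunc_parity N k) as Hre. pose proof (sinH_trunc_parity N k) as Him.
  rewrite Nat.even_add in Hre, Him. rewrite !neg1_pow_parity.
  destruct (Nat.even j), (Nat.even k); simpl in Hre, Him;
    rewrite ?Hre, ?Him by reflexivity; ring.
Qed.

Lemma sum_cosH_trunc_eigenfun N x :
  sum_n (fun k => cosH_trunc N k * eigenfun B C k x) (j + 2 * N + 1)
  = cos_trunc N (2 * B * t * cos x) * eigenfun B C j x.
Proof.
  etransitivity.
  { apply (sum_Hpow_e_comb_eigenfun B C j (fun m => (-1) ^ m * t ^ (2 * m) / INR (fact (2 * m)))
             (fun m => 2 * m)%nat); lra || lia. }
  f_equal. apply sum_n_ext_R. intros m _.
  replace (2 * B * t * cos x) with (t * (2 * B * cos x)) by ring.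
  rewrite (Rpow_mult_distr t). unfold Rdiv. ring.
Qed.

Lemma sum_sinH_trunc_eigenfun N x :
  sum_n (fun k => sinH_trunc N k * eigenfun B C k x) (j + 2 * N + 1)
  = sin_trunc N (2 * B * t * cos x) * eigenfun B C j x.
Proof.
  etransitivity.
  { apply (sum_Hpow_e_comb_eigenfun B C j
             (fun m => (-1) ^ m * t ^ (2 * m + 1) / INR (fact (2 * m + 1)))
             (fun m => 2 * m + 1)%nat); lra || lia. }
  f_equal. apply sum_n_ext_R. intros m _.
  replace (2 * B * t * cos x) with (t * (2 * B * cos x)) by ring.
  rewrite (Rpow_mult_distr t). unfold Rdiv. ring.
Qed.

Local Notation phase x := (2 * B * t * cos x).

Definition modulated_norm2 (g : R -> R) : R :=
  RInt (fun x => (g (phase x) * eigenfun B C j x) ^ 2 * spectral_weight B C x) 0 PI.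

Definition spectral_integral : R :=
  RInt (fun x => cos (2 * phase x) * (eigenfun B C j x ^ 2 * spectral_weight B C x)) 0 PI.

Lemma Rabs_phase_le x : Rabs (phase x) <= X.
Proof.
  rewrite !Rabs_mult, (Rabs_pos_eq 2), (Rabs_pos_eq B) by lra.
  assert (Rabs (cos x) <= 1) by apply Rabs_le, COS_bound.
  pose proof (Rabs_pos t). pose proof (Rabs_pos (cos x)).
  assert (2 * B * Rabs t * Rabs (cos x) <= 2 * B * Rabs t * 1)
    by (apply Rmult_le_compat_l; [apply Rmult_le_pos |]; lra).
  assert (2 * B * Rabs t <= 3 * (B + C) * Rabs t) by (apply Rmult_le_compat_r; lra).
  lra.
Qed.

Lemma C1_phase (g : R -> R) : C1 g -> C1 (fun x => g (phase x)).
Proof. intros Hg. apply (C1_comp (fun x => phase x)); [apply C1_scal, C1_cos | exact Hg]. Qed.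

Hypothesis Hr : Rabs (weight_param B C) < 1.

Lemma C1_modulated_integrand (g : R -> R) : C1 g ->
  C1 (fun x => (g (phase x) * eigenfun B C j x) ^ 2 * spectral_weight B C x).
Proof.
  intros Hg. apply C1_mult; [|now apply C1_spectral_weight].
  apply (C1_comp (fun x => g (phase x) * eigenfun B C j x) (fun y => y ^ 2)); [|apply C1_pow].
  apply C1_mult; [now apply C1_phase | apply C1_eigenfun].
Qed.

Lemma parity_trunc_spectral N :
  parity_trunc N = (-1) ^ j * (modulated_norm2 (cos_trunc N) - modulated_norm2 (sin_trunc N)).
Proof.
  unfold parity_trunc, modulated_norm2.
  rewrite (Series_finite_support _ (j + 2 * N + 1))
    by (intros k Hk; rewrite cosH_trunc_support, sinH_trunc_support by lia; ring).
  rewrite (sum_n_ext_R _ (fun k => (-1) ^ j * (cosH_trunc N k ^ 2 - sinH_trunc N k ^ 2)))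
    by (intros; apply parity_trunc_term).
  rewrite sum_n_Rmult_l, sum_n_Rminus, !(parseval_finite B C) by auto.
  f_equal. f_equal; apply RInt_ext_R; intros x _.
  - now rewrite sum_cosH_trunc_eigenfun.
  - now rewrite sum_sinH_trunc_eigenfun.
Qed.

Lemma modulated_norm2_trunc_error N :
  Rabs (modulated_norm2 (cos_trunc N) - modulated_norm2 (sin_trunc N) - spectral_integral)
  <= cos_double_eps X N.
Proof.
  set (w := fun x => eigenfun B C j x ^ 2 * spectral_weight B C x).
  set (f := fun x => (cos_trunc N (phase x) * eigenfun B C j x) ^ 2 * spectral_weight B C x).
  set (g := fun x => (sin_trunc N (phase x) * eigenfun B C j x) ^ 2 * spectral_weight B C x).
  set (h := fun x => cos (2 * phase x) * w x).
  assert (Hw : forall x, 0 <= w x)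
    by (intros x; apply Rmult_le_pos; [apply pow2_ge_0 | now apply Rlt_le, spectral_weight_pos]).
  assert (Cw : C1 w)
    by (apply C1_mult; [apply (C1_comp _ _ (C1_eigenfun B C j) (C1_pow 2))
                      | now apply C1_spectral_weight]).
  rewrite <- (Rmult_1_r (cos_double_eps X N)), <- (eigenfun_norm2 B C HB HC Hr j).
  apply (norm_RInt_le (fun x => f x - g x - h x) (fun x => cos_double_eps X N * w x) 0 PI).
  - pose proof PI_RGT_0. lra.
  - intros x _.
    replace (f x - g x - h x) with ((cos_trunc N (phase x) ^ 2 - sin_trunc N (phase x) ^ 2
                                     - cos (2 * phase x)) * w x) by (unfold f, g, h, w; ring).
    rewrite Rabs_mult, (Rabs_pos_eq (w x)) by apply Hw.
    apply Rmult_le_compat_r; [apply Hw | now apply cos_double_trunc_error, Rabs_phase_le].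
  - apply (is_RInt_minus (fun x => f x - g x) h); [apply (is_RInt_minus f g)|];
      apply is_RInt_C1.
    + apply C1_modulated_integrand, C1_cos_trunc.
    + apply C1_modulated_integrand, C1_sin_trunc.
    + apply C1_mult; [|exact Cw].
      apply (C1_comp (fun x => 2 * phase x)); [apply C1_scal, C1_scal, C1_cos | apply C1_cos].
  - apply (is_RInt_scal (V := R_NormedModule)), is_RInt_C1, Cw.
Qed.

Lemma parity_expect_spectral : parity_expect B C j t = (-1) ^ j * spectral_integral.
Proof.
  assert (H2 : is_lim_seq parity_trunc ((-1) ^ j * spectral_integral)).
  { eapply is_lim_seq_ext; [intros N; symmetry; apply parity_trunc_spectral|].
    apply (is_lim_seq_scal_l _ ((-1) ^ j) spectral_integral).
    apply (is_lim_seq_error_bound _ (cos_double_eps X)).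
    - apply modulated_norm2_trunc_error.
    - apply is_lim_seq_cos_double_eps. }
  pose proof (is_lim_seq_unique _ _ is_lim_seq_parity_trunc) as E1.
  apply is_lim_seq_unique in H2. rewrite E1 in H2. now injection H2.
Qed.

End Propagator.

(** * An oscillatory integral *)

Lemma Rabs_sin_mult_le a b : Rabs (sin a * b) <= Rabs b.
Proof.
  rewrite Rabs_mult. rewrite <- (Rmult_1_l (Rabs b)) at 2.
  apply Rmult_le_compat_r; [apply Rabs_pos | apply Rabs_le, SIN_bound].
Qed.

Section RiemannLebesgue.

Variables psi dpsi : R -> R.
Hypothesis Hd : forall x, is_derive psi x (dpsi x).
Hypothesis Hc : forall x, continuous dpsi x.

Lemma RInt_cos_cos_by_parts l :
  l * RInt (fun x => cos (l * cos x) * sin x * psi x) 0 PI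
  = RInt (fun x => sin (l * cos x) * dpsi x) 0 PI
    - (sin (l * cos PI) * psi PI - sin (l * cos 0) * psi 0).
Proof.
  set (h := fun x => cos (l * cos x) * sin x * psi x).
  set (k := fun x => sin (l * cos x) * dpsi x).
  assert (Ch : C1 h).
  { apply C1_mult; [apply C1_mult; [|apply C1_sin] | now exists dpsi].
    apply (C1_comp (fun x => l * cos x)); [apply C1_scal, C1_cos | apply C1_cos]. }
  assert (Ck : forall x, continuous k x).
  { intros x. apply (continuous_mult (K := R_AbsRing)); [|apply Hc].
    apply C1_continuous, (C1_comp (fun x => l * cos x)); [apply C1_scal, C1_cos | apply C1_sin]. }
  assert (HF : is_RInt (fun x => - l * h x + k x) 0 PI
                 (sin (l * cos PI) * psi PI - sin (l * cos 0) * psi 0)).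
  { apply (is_RInt_derive (fun x => sin (l * cos x) * psi x)).
    - intros x _.
      replace (- l * h x + k x)
        with (l * - sin x * cos (l * cos x) * psi x + sin (l * cos x) * dpsi x)
        by (unfold h, k; ring).
      apply (is_derive_mult (fun x => sin (l * cos x)) psi); [| apply Hd | apply Rmult_comm].
      apply (is_derive_comp sin (fun x => l * cos x));
        [apply is_derive_sin | apply is_derive_scal, is_derive_cos].
    - intros x _. apply (continuous_plus (fun x => - l * h x) k); [|apply Ck].
      exact (C1_continuous _ x (C1_scal (- l) h Ch)). }
  enough (- l * RInt h 0 PI + RInt k 0 PI
          = sin (l * cos PI) * psi PI - sin (l * cos 0) * psi 0) by lra.
  rewrite <- (is_RInt_unique _ _ _ _ HF). symmetry. apply is_RInt_unique.
  apply (is_RInt_plus (fun x => - l * h x) k).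
  - exact (is_RInt_scal _ _ _ _ _ (is_RInt_C1 h 0 PI Ch)).
  - apply (RInt_correct (V := R_CompleteNormedModule)), ex_RInt_continuous. auto.
Qed.

Lemma cos_cos_integral_bound l : 0 < l ->
  Rabs (RInt (fun x => cos (l * cos x) * sin x * psi x) 0 PI)
  <= (RInt (fun x => Rabs (dpsi x)) 0 PI + Rabs (psi PI) + Rabs (psi 0)) / l.
Proof.
  intros Hl. apply (Rmult_le_reg_l l); [exact Hl|].
  replace (l * ((RInt (fun x => Rabs (dpsi x)) 0 PI + Rabs (psi PI) + Rabs (psi 0)) / l))
    with (RInt (fun x => Rabs (dpsi x)) 0 PI + Rabs (psi PI) + Rabs (psi 0)) by (field; lra).
  rewrite <- (Rabs_pos_eq l) at 1 by lra.
  rewrite <- Rabs_mult, RInt_cos_cos_by_parts.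
  assert (Hk : Rabs (RInt (fun x => sin (l * cos x) * dpsi x) 0 PI)
               <= RInt (fun x => Rabs (dpsi x)) 0 PI).
  { apply (norm_RInt_le (fun x => sin (l * cos x) * dpsi x) (fun x => Rabs (dpsi x)) 0 PI);
      [pose proof PI_RGT_0; lra | | |].
    - intros x _. apply Rabs_sin_mult_le.
    - apply (RInt_correct (V := R_CompleteNormedModule)), ex_RInt_continuous.
      intros x _. apply (continuous_mult (K := R_AbsRing)); [|apply Hc].
      apply C1_continuous, (C1_comp (fun x => l * cos x)); [apply C1_scal, C1_cos | apply C1_sin].
    - apply (RInt_correct (V := R_CompleteNormedModule)), ex_RInt_continuous.
      intros x _. exact (continuous_Rabs_comp dpsi x (Hc x)). }
  pose proof (Rabs_sin_mult_le (l * cos PI) (psi PI)).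
  pose proof (Rabs_sin_mult_le (l * cos 0) (psi 0)).
  unfold Rminus. eapply Rle_trans; [apply Rabs_triang|]. rewrite Rabs_Ropp.
  eapply Rle_trans; [apply Rplus_le_compat; [exact Hk | apply Rabs_triang]|].
  rewrite Rabs_Ropp. lra.
Qed.

Lemma is_lim_cos_cos_integral :
  is_lim (fun l => RInt (fun x => cos (l * cos x) * sin x * psi x) 0 PI) p_infty 0.
Proof.
  set (M := RInt (fun x => Rabs (dpsi x)) 0 PI + Rabs (psi PI) + Rabs (psi 0)).
  assert (Hinv : is_lim (fun l => M / l) p_infty 0).
  { replace (Finite 0) with (Rbar_mult M (Rbar_inv p_infty)) by (simpl; f_equal; ring).
    apply is_lim_scal_l, is_lim_inv; [apply is_lim_id | discriminate]. }
  apply (is_lim_le_le_loc (fun l => - (M / l)) (fun l => M / l)); [| | exact Hinv].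
  - exists 0. intros l Hl. now apply Rabs_le_between, cos_cos_integral_bound.
  - replace (Finite 0) with (Rbar_opp 0) by (simpl; f_equal; ring). now apply is_lim_opp.
Qed.

End RiemannLebesgue.

Lemma is_lim_scal_id_p_infty a : 0 < a -> is_lim (fun t => a * t) p_infty p_infty.
Proof.
  intros Ha. replace p_infty with (Rbar_mult a p_infty) at 2.
  - apply is_lim_scal_l, is_lim_id.
  - simpl. destruct (Rle_dec 0 a) as [Ha'|]; [|lra].
    destruct (Rle_lt_or_eq_dec 0 a Ha'); [reflexivity | lra].
Qed.

Theorem theorem2 (B C : R) (j : nat)
  (hB : 0 < B) (hC0 : 0 < C) (hC1 : C < sqrt 2 * B) :
  is_lim (fun t => parity_expect B C j t) p_infty 0.
Proof.
  pose proof (weight_param_bound B C hB hC0 hC1) as Hr.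
  set (amp := fun x => sin x * (jacobi_poly B C j (2 * B * cos x) ^ 2 * spectral_weight B C x)).
  assert (Hamp : C1 amp).
  { apply (C1_mult _ _ C1_sin), C1_mult; [|now apply C1_spectral_weight].
    apply (C1_comp (fun x => jacobi_poly B C j (2 * B * cos x)) (fun y => y ^ 2)); [|apply C1_pow].
    apply (C1_comp (fun x => 2 * B * cos x)); [apply C1_scal, C1_cos | apply C1_jacobi_poly]. }
  apply (is_lim_ext (fun t => (-1) ^ j * RInt (fun x => cos (4 * B * t * cos x) * sin x * amp x) 0 PI)).
  { intros t. rewrite parity_expect_spectral by auto. f_equal. apply RInt_ext_R. intros x _.
    unfold amp, eigenfun. replace (2 * (2 * B * t * cos x)) with (4 * B * t * cos x) by ring. ring. }
  replace (Finite 0) with (Rbar_mult ((-1) ^ j) 0) by (simpl; f_equal; ring).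
  apply is_lim_scal_l.
  apply (is_lim_comp (fun l => RInt (fun x => cos (l * cos x) * sin x * amp x) 0 PI)
           (fun t => 4 * B * t) p_infty 0 p_infty).
  - destruct Hamp as [damp [Hd Hc]]. now apply (is_lim_cos_cos_integral amp damp).
  - apply is_lim_scal_id_p_infty. lra.
  - exists 0. intros; discriminate.
Qed.
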